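(* Let $T$ be a symmetric tree and let $g:A\to B$ be a function such that the functigraph $F_T$ is symmetric. Then $fix(F_T)=2|V(T)|-t$ for some $t\in\{2,3\}$ if and only if $T=P_2$.
   Context: A set $S\subseteq V(H)$ is a fixing set of a graph $H$ if the only automorphism of $H$ fixing every vertex of $S$ is the identity; $fix(H)$ is the minimum cardinality of a fixing set of $H$. A connected graph is symmetric if its fixing number is nonzero. Functigraph: let $G_1,G_2$ be disjoint copies of a connected graph $G$, with $A=V(G_1)$, $B=V(G_2)$, and let $g:A\to B$ be a function. The functigraph $F_G$ has vertex set $A\cup B$ and edge set $E(G_1)\cup E(G_2)\cup\{ug(u):u\in A\}$. *)

From mathcomp Require Import all_boot all_fingroup.
Set Implicit Arguments. Unset Strict Implicit. Unset Printing Implicit Defensive.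
Local Open Scope nat_scope.

Section Graphs.
Variable W : finType.

Definition simple_graph (e : rel W) : Prop := symmetric e /\ irreflexive e.

Definition connected_graph (e : rel W) : Prop := forall x y : W, connect e x y.

Definition acyclic_graph (e : rel W) : Prop :=
  forall p : seq W, uniq p -> (3 <= size p)%N -> ~~ path.cycle e p.

Definition is_tree (e : rel W) : Prop :=
  simple_graph e /\ 0 < #|W| /\ connected_graph e /\ acyclic_graph e.

Definition is_aut (e : rel W) (s : {perm W}) : bool :=
  [forall x, forall y, e (s x) (s y) == e x y].

Definition fixing_set (e : rel W) (S : {set W}) : bool :=
  [forall s : {perm W}, (is_aut e s && [forall x in S, s x == x]) ==> (s == 1%g)].

(* fix(H): minimum cardinality of a fixing set ([set: W] is always one) *)
Definition fixing_number (e : rel W) : nat :=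
  \big[minn/#|W|]_(S : {set W} | fixing_set e S) #|S|.

Definition isomorphic (W' : finType) (e : rel W) (e' : rel W') : Prop :=
  exists f : W -> W', bijective f /\ forall x y, e' (f x) (f y) = e x y.
End Graphs.

Definition path_graph (n : nat) : rel 'I_n :=
  fun i j => (i.+1 == j :> nat) || (j.+1 == i :> nat).

(* functigraph F_G of (V, e) with g : A -> B; A = inl copy, B = inr copy *)
Definition functigraph (V : finType) (e : rel V) (g : V -> V) : rel (V + V) :=
  fun x y => match x, y with
  | inl u, inl v => e u v
  | inr u, inr v => e u v
  | inl u, inr v => g u == v
  | inr v, inl u => g u == v
  end.
Arguments path_graph n _ _ : clear implicits.

(* A tree T with at least three vertices contains an induced path x - y - z.  An automorphism
   of F_T fixing every vertex outside a set R of four of the six copies of x, y, z permutes R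
   and preserves adjacency among the six copies; a finite check over the 4^3 possible
   positions of g x, g y, g z (on the path or off it) shows that R can always be chosen so
   that only the identity does this.  Hence fix(F_T) <= 2|V(T)| - 4.  A one-vertex tree has
   fixing number 0, so t in {2, 3} forces T = P_2.  Conversely, for T = P_2 the same argument
   on the edge leaves two of the four vertices unfixed, so 1 <= fix(F_T) <= 2|V(T)| - 2. *)

From HB Require Import structures.
From mathcomp Require Import all_boot all_fingroup zify.
Set Implicit Arguments. Unset Strict Implicit. Unset Printing Implicit Defensive.
Local Open Scope nat_scope.

HB.instance Definition _ := SemiGroup.isComLaw.Build nat minn minnA minnC.

Lemma fixing_number_le (W : finType) (E : rel W) (S : {set W}) :
  fixing_set E S -> fixing_number E <= #|S|.
Proof. by move=> fixS; rewrite /fixing_number (bigD1 S) //= geq_minl. Qed.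

Lemma fixing_number_card_le1 (W : finType) (E : rel W) :
  #|W| <= 1 -> fixing_number E = 0.
Proof.
move=> W_le1; apply/eqP; rewrite -leqn0 -(cards0 W) fixing_number_le //.
apply/forallP => s; apply/implyP => _; apply/eqP.
by apply: (@perm_on_id _ s [set: W]); rewrite ?cardsT //; apply/subsetP.
Qed.

Definition relabel (r p : seq nat) (i : nat) : nat :=
  if i \in r then nth 0 p (index i r) else i.

Definition preserves_on (m : nat) (H : rel nat) (f : nat -> nat) : bool :=
  all (fun i => all (fun j => H (f i) (f j) == H i j) (iota 0 m)) (iota 0 m).

Definition id_on (m : nat) (f : nat -> nat) : bool := all (fun i => f i == i) (iota 0 m).

Definition rigid (m : nat) (H : rel nat) (r : seq nat) : bool :=
  all (fun p => preserves_on m H (relabel r p) ==> id_on m (relabel r p)) (permutations r).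

Section RigidCertificate.

Variables (W : finType) (E : rel W) (m : nat) (phi : nat -> W) (H : rel nat) (r : seq nat).
Hypothesis phi_inj : forall i j, i < m -> j < m -> phi i = phi j -> i = j.
Hypothesis phi_induced : forall i j, i < m -> j < m -> E (phi i) (phi j) = H i j.
Hypotheses (r_uniq : uniq r) (r_lt : all (gtn m) r).

Let r_ltm i : i \in r -> i < m. Proof. exact: (allP r_lt). Qed.

Let map_phi_uniq : uniq (map phi r).
Proof. by rewrite map_inj_in_uniq // => i j ir jr; apply: phi_inj; apply: r_ltm. Qed.

Lemma relabel_perm (s : {perm W}) :
  (forall w, w \notin map phi r -> s w = w) ->
  exists2 p, p \in permutations r &
    forall i, i < m -> relabel r p i < m /\ phi (relabel r p i) = s (phi i).
Proof.
move=> s_out.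
have s_in i : i \in r -> s (phi i) \in map phi r.
  move=> ir; apply: contraT => sNin; have /perm_inj si := s_out _ sNin.
  by rewrite si map_f in sNin.
pose J i := nth 0 r (index (s (phi i)) (map phi r)).
have J_in i : i \in r -> J i \in r /\ phi (J i) = s (phi i).
  move=> ir; have lt_idx : index (s (phi i)) (map phi r) < size r.
    by rewrite -(size_map phi) index_mem s_in.
  by rewrite mem_nth // -(nth_map 0 (phi 0)) // nth_index ?s_in.
have J_inj : {in r &, injective J}.
  move=> i j ir jr eqJ; apply: phi_inj; rewrite ?r_ltm //; apply: (@perm_inj _ s).
  by rewrite -(J_in i ir).2 -(J_in j jr).2 eqJ.
have sub_Jr : {subset map J r <= r} by move=> _ /mapP[i ir ->]; case: (J_in i ir).
have J_uniq : uniq (map J r) by rewrite map_inj_in_uniq.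
have [|_ eq_Jr] := uniq_min_size J_uniq sub_Jr; first by rewrite size_map.
exists (map J r); first by rewrite mem_permutations uniq_perm.
move=> i im; rewrite /relabel; case: ifPn => [ir | iNr].
  by rewrite (nth_map 0) ?index_mem // nth_index //; have [/r_ltm] := J_in i ir.
rewrite s_out //; apply: contra iNr => /mapP[j jr /phi_inj eq_ij].
by rewrite (eq_ij im (r_ltm jr)).
Qed.

Lemma rigid_fixing_set : rigid m H r -> fixing_set E [set w | w \notin map phi r].
Proof.
move=> r_rigid; apply/forallP => s; apply/implyP => /andP[/forallP s_aut /forallP s_fix].
have s_out w : w \notin map phi r -> s w = w.
  by move=> wNr; apply/eqP; move: (s_fix w); rewrite inE wNr.
have [p p_perm p_s] := relabel_perm s_out.
have p_pres : preserves_on m H (relabel r p).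
  apply/allP => i; rewrite mem_iota add0n => /andP[_ im].
  apply/allP => j; rewrite mem_iota add0n => /andP[_ jm].
  have [ipm ipe] := p_s i im; have [jpm jpe] := p_s j jm.
  by rewrite -phi_induced // ipe jpe (eqP (forallP (s_aut _) _)) phi_induced.
have /allP/(_ _ p_perm)/implyP/(_ p_pres)/allP p_id := r_rigid.
apply/eqP/permP => w; rewrite perm1.
case: (boolP (w \in map phi r)) => [/mapP[i /r_ltm im ->]|]; last exact: s_out.
by have [_ <-] := p_s i im; rewrite (eqP (p_id i _)) // mem_iota.
Qed.

Lemma fixing_number_le_rigid : rigid m H r -> fixing_number E <= #|W| - size r.
Proof.
move=> /rigid_fixing_set /fixing_number_le; rewrite (cardsCs [set w | _]).
suff -> : #|~: [set w | w \notin map phi r]| = size r by [].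
rewrite -(size_map phi) -(card_uniqP map_phi_uniq).
by apply: eq_card => w; rewrite !inE negbK.
Qed.

End RigidCertificate.

(* Only a candidate generator: [certified] rechecks every property of [r] it relies on. *)
Fixpoint subsets (k : nat) (s : seq nat) : seq (seq nat) :=
  match k, s with
  | 0, _ => [:: [::]]
  | k.+1, [::] => [::]
  | k.+1, x :: s' => map (cons x) (subsets k s') ++ subsets k.+1 s'
  end.

Definition certified (m k : nat) (H : rel nat) : bool :=
  has (fun r => [&& uniq r, size r == k, all (gtn m) r & rigid m H r]) (subsets k (iota 0 m)).

Definition path_rel (i j : nat) : bool := (i.+1 == j) || (j.+1 == i).

Definition induced_path (V : eqType) (e : rel V) (L : seq V) : Prop :=
  uniq L /\ forall d i j, i < size L -> j < size L -> e (nth d L i) (nth d L j) = path_rel i j.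

(* Vertex [i < k] of the model is the copy in [A] of the [i]-th path vertex, vertex [k + i]
   its copy in [B]; [c]`_i is the position of the [g]-image of the [i]-th path vertex along
   the path, or [k] when it lies off the path. *)
Definition functigraph_model (k : nat) (c : seq nat) : rel nat := fun i j =>
  if (i < k) == (j < k) then path_rel i j
  else if i < k then nth k c i + k == j else nth k c j + k == i.

Definition functigraph_vertex (V : Type) (d : V) (L : seq V) (i : nat) : V + V :=
  if i < size L then inl (nth d L i) else inr (nth d L (i - size L)).

Lemma eq_nth_index (T : eqType) (d w : T) (L : seq T) j :
  uniq L -> j < size L -> (w == nth d L j) = (index w L == j).
Proof.
move=> L_uniq jL; apply/eqP/eqP => [->|idx_w]; first exact: index_uniq.
have wL : w \in L by rewrite -index_mem idx_w.
by rewrite -idx_w nth_index.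
Qed.

Section FunctigraphModel.

Variables (V : finType) (e : rel V) (g : V -> V) (d : V) (L : seq V).
Hypothesis L_path : induced_path e L.

Local Notation n := (size L).
Local Notation codes := [seq index (g x) L | x <- L].

Lemma functigraph_vertex_inj i j : i < 2 * n -> j < 2 * n ->
  functigraph_vertex d L i = functigraph_vertex d L j -> i = j.
Proof.
have [L_uniq _] := L_path; rewrite /functigraph_vertex => i_lt j_lt.
(* [size L] appears under two different coercions of [V]; naming it lets [lia] identify them. *)
case: ltnP => iL; case: ltnP => jL // [/(congr1 (index^~ L))];
  rewrite !index_uniq //; set k := size L in i_lt j_lt iL jL *; lia.
Qed.

Lemma functigraph_vertex_induced i j : i < 2 * n -> j < 2 * n ->
  functigraph e g (functigraph_vertex d L i) (functigraph_vertex d L j)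
  = functigraph_model n codes i j.
Proof.
have [L_uniq L_adj] := L_path; rewrite /functigraph_vertex /functigraph_model => i_lt j_lt.
have code u : u < n -> nth n codes u = index (g (nth d L u)) L by move=> uL; rewrite (nth_map d).
have sub_lt k u : u < 2 * k -> k <= u -> u - k < k by lia.
have eq_subn a k u : k <= u -> (a == u - k) = (a + k == u) by move=> ?; apply/eqP/eqP; lia.
have path_rel_subn k : {in [pred u | k <= u] &, forall u v, path_rel (u - k) (v - k) = path_rel u v}.
  move=> u v; rewrite !inE /path_rel => ku kv.
  by apply/orP/orP => -[] /eqP uv; [left | right | left | right]; apply/eqP; lia.
case: ltnP => iL; case: ltnP => jL /=.
- exact: L_adj.
- by rewrite eq_nth_index ?sub_lt // code // eq_subn.
- by rewrite eq_nth_index ?sub_lt // code // eq_subn.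
- by rewrite L_adj ?sub_lt // path_rel_subn.
Qed.

End FunctigraphModel.

Lemma functigraph_fixing_number_le (V : finType) (e : rel V) (g : V -> V) (x : V) (L : seq V) k :
  induced_path e (x :: L) ->
  certified (2 * size (x :: L)) k
    (functigraph_model (size (x :: L)) [seq index (g y) (x :: L) | y <- x :: L]) ->
  fixing_number (functigraph e g) <= 2 * #|V| - k.
Proof.
move=> L_path /hasP[r _ /and4P[r_uniq /eqP <- r_lt r_rigid]].
have -> : 2 * #|V| = #|{: V + V}| by rewrite card_sum; lia.
apply: (fixing_number_le_rigid (phi := functigraph_vertex x (x :: L))) r_rigid => //.
- exact: functigraph_vertex_inj L_path.
- exact: functigraph_vertex_induced L_path.
Qed.

Lemma path3_functigraphs_certified :
  all (fun c0 => all (fun c1 => all (fun c2 =>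
    certified 6 4 (functigraph_model 3 [:: c0; c1; c2])) (iota 0 4)) (iota 0 4)) (iota 0 4).
Proof. by vm_compute. Qed.

Lemma path2_functigraphs_certified :
  all (fun c0 => all (fun c1 =>
    certified 4 2 (functigraph_model 2 [:: c0; c1])) (iota 0 3)) (iota 0 3).
Proof. by vm_compute. Qed.

Lemma functigraph_fixing_number_le_path3 (V : finType) (e : rel V) (g : V -> V) (x y z : V) :
  induced_path e [:: x; y; z] -> fixing_number (functigraph e g) <= 2 * #|V| - 4.
Proof.
move=> xyz_path; apply: functigraph_fixing_number_le xyz_path _.
have code_in w : index w [:: x; y; z] \in iota 0 4 by rewrite mem_iota ltnS index_size.
by move: path3_functigraphs_certified
  => /allP/(_ _ (code_in (g x)))/allP/(_ _ (code_in (g y)))/allP/(_ _ (code_in (g z))).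
Qed.

Lemma functigraph_fixing_number_le_edge (V : finType) (e : rel V) (g : V -> V) (x y : V) :
  induced_path e [:: x; y] -> fixing_number (functigraph e g) <= 2 * #|V| - 2.
Proof.
move=> xy_path; apply: functigraph_fixing_number_le xy_path _.
have code_in w : index w [:: x; y] \in iota 0 3 by rewrite mem_iota ltnS index_size.
by move: path2_functigraphs_certified => /allP/(_ _ (code_in (g x)))/allP/(_ _ (code_in (g y))).
Qed.

Lemma induced_path3 (V : finType) (e : rel V) (x y z : V) :
  simple_graph e -> uniq [:: x; y; z] -> e x y -> e y z -> ~~ e x z ->
  induced_path e [:: x; y; z].
Proof.
move=> [e_sym e_irr] xyz_uniq exy eyz /negbTE nexz; split=> // d.
have eyx : e y x by rewrite e_sym.
have ezy : e z y by rewrite e_sym.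
have nezx : e z x = false by rewrite e_sym.
by move=> [|[|[|i]]] [|[|[|j]]] //= _ _; rewrite ?e_irr.
Qed.

Lemma induced_path2 (V : finType) (e : rel V) (x y : V) :
  simple_graph e -> x != y -> e x y -> induced_path e [:: x; y].
Proof.
move=> [e_sym e_irr] xy exy; split=> [|d]; first by rewrite /= inE xy.
have eyx : e y x by rewrite e_sym.
by move=> [|[|i]] [|[|j]] //= _ _; rewrite ?e_irr.
Qed.

Lemma exists_notin (T : finType) (s : seq T) : size s < #|T| -> exists w, w \notin s.
Proof.
move=> lt_s; apply/existsP; move: lt_s; apply: contraLR => /existsPn s_full.
rewrite -leqNgt; apply: leq_trans (card_size s); apply: subset_leq_card.
by apply/subsetP => w _; rewrite -[w \in s]negbK s_full.
Qed.

Lemma connected_cherry (T : finType) (e : rel T) :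
  symmetric e -> connected_graph e -> 2 < #|T| -> exists x y z, [/\ e x y, e y z & x != z].
Proof.
move=> e_sym e_conn T_gt2.
have [a _] := exists_notin (s := [::]) (ltnW (ltnW T_gt2)).
have [b] := exists_notin (s := [:: a]) (ltnW T_gt2); rewrite inE => ba.
have [a' eaa'] : exists a', e a a'.
  have /connectP[[|a' p] /=] := e_conn a b; first by move=> _ eb; rewrite eb eqxx in ba.
  by case/andP => eaa' _ _; exists a'.
case: (boolP [exists v, e a v && (v != a')]) => [/existsP[v /andP[eav va']] | /existsPn no_a].
  by exists v, a, a'; rewrite e_sym.
case: (boolP [exists v, e a' v && (v != a)]) => [/existsP[v /andP[ea'v va]] | /existsPn no_a'].
  by exists a, a', v; rewrite eq_sym.
have aa'_closed : closed e [:: a; a'].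
  apply: intro_closed; first exact: sym_connect_sym.
  move=> u v euv; rewrite !inE => /orP[] /eqP eq_u; subst u.
    by have := no_a v; rewrite euv negbK => ->; rewrite orbT.
  by have := no_a' v; rewrite euv negbK => ->.
suff : #|T| <= 2 by rewrite leqNgt T_gt2.
apply: leq_trans (card_size [:: a; a']); apply/subset_leq_card/subsetP => w _.
by rewrite -(closed_connect aa'_closed (e_conn a w)) inE eqxx.
Qed.

Lemma tree_induced_path3 (V : finType) (e : rel V) :
  is_tree e -> 2 < #|V| -> exists x y z, induced_path e [:: x; y; z].
Proof.
move=> [[e_sym e_irr] [_ [e_conn e_acyc]]] V_gt2.
have [x [y [z [exy eyz xz]]]] := connected_cherry e_sym e_conn V_gt2.
have xy : x != y by apply: contraTneq exy => ->; rewrite e_irr.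
have yz : y != z by apply: contraTneq eyz => ->; rewrite e_irr.
have xyz_uniq : uniq [:: x; y; z] by rewrite /= !inE negb_or xy xz yz.
exists x, y, z; apply: induced_path3 => //.
apply: contraNN (e_acyc _ xyz_uniq isT) => exz.
by rewrite /= exy eyz (e_sym z) exz.
Qed.

Lemma card2_pair (T : finType) : #|T| = 2 -> exists a b : T, a != b /\ forall w, w \in [:: a; b].
Proof.
rewrite cardE; case enumT: (enum T) => [|a [|b []]] // _.
exists a, b; have := enum_uniq T; rewrite enumT /= inE andbT => ab.
by split=> // w; rewrite -enumT mem_enum.
Qed.

Lemma connected_card2_isomorphic_path2 (T : finType) (e : rel T) :
  simple_graph e -> connected_graph e -> #|T| = 2 -> isomorphic e (path_graph 2).
Proof.
move=> [e_sym e_irr] e_conn /card2_pair[a [b [ab T_ab]]].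
have a_or_b w : w = a \/ w = b by move: (T_ab w); rewrite !inE => /orP[] /eqP; [left | right].
have eab : e a b.
  have /connectP[[|c p] /=] := e_conn a b; first by move=> _ ba; rewrite ba eqxx in ab.
  by case/andP; case: (a_or_b c) => -> //; rewrite e_irr.
have ba : (b == a) = false by rewrite eq_sym (negbTE ab).
pose f w : 'I_2 := if w == a then ord0 else ord_max.
pose h (i : 'I_2) : T := if val i == 0 then a else b.
exists f; split.
  exists h => [w | [[|[|i]] i_lt]] //; first by case: (a_or_b w) => ->; rewrite /f ?ba ?eqxx.
    by rewrite /h /f eqxx; apply: val_inj.
  by rewrite /h /f ba; apply: val_inj.
by move=> u v; case: (a_or_b u) => ->; case: (a_or_b v) => ->; rewrite /f ?ba ?eqxx ?e_irr // e_sym.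
Qed.

Lemma isomorphic_path2_edge (T : finType) (e : rel T) :
  isomorphic e (path_graph 2) -> #|T| = 2 /\ exists x y, x != y /\ e x y.
Proof.
case=> f [[h fK hK] e_f]; split; first by rewrite (bij_eq_card (Bijective fK hK)) card_ord.
exists (h ord0), (h ord_max); split; last by rewrite -e_f !hK.
by apply/eqP => /(congr1 f); rewrite !hK.
Qed.

Theorem theorem3p10 (V : finType) (e : rel V) (g : V -> V) :
  is_tree e ->
  0 < fixing_number e ->
  0 < fixing_number (functigraph e g) ->
  ((exists t : nat, t \in [:: 2; 3] /\
      fixing_number (functigraph e g) = 2 * #|V| - t)
   <-> isomorphic e (path_graph 2)).
Proof.
move=> e_tree e_fix_pos F_fix_pos; have [e_simple [_ [e_conn _]]] := e_tree.
split.
- case=> t [t23 F_fix].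
  have [V_gt2 | V_le2] := ltnP 2 #|V|.
    have [x [y [z xyz_path]]] := tree_induced_path3 e_tree V_gt2.
    have := functigraph_fixing_number_le_path3 g xyz_path.
    by rewrite F_fix; move: t23; rewrite !inE => /orP[] /eqP ->; lia.
  have V_gt1 : 1 < #|V|.
    by rewrite ltnNge; apply: contraTN e_fix_pos => /(fixing_number_card_le1 e) ->.
  by apply: connected_card2_isomorphic_path2 => //; apply/eqP; rewrite eqn_leq V_le2.
- case/isomorphic_path2_edge => V2 [x [y [xy exy]]].
  have := functigraph_fixing_number_le_edge g (induced_path2 e_simple xy exy).
  rewrite V2 => F_fix_le2.
  exists (4 - fixing_number (functigraph e g)); split; last by lia.
  rewrite !inE; apply/orP.
  by case: (ltnP 1 (fixing_number (functigraph e g))) => ?; [left | right]; apply/eqP; lia.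
Qed.
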